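(* Let $b^*>0$, let $f$ be a real function that is three times differentiable on an open interval containing $[0,b^*]$, with $f'''$ Lebesgue integrable on $[0,b^*]$. Let $a,b\in[0,b^*]$ with $a<b$, let $\alpha\in[0,1]$, $m\in(0,1]$, and let $q>1$, $p$ with $\frac1p+\frac1q=1$. If $|f'''|^q$ is $(\alpha,m)$-convex on $[0,b^*]$, then $$\left|\int_a^{mb}f(x)\,dx-\frac{mb-a}{6}\left[f(a)+4f\left(\frac{a+mb}{2}\right)+f(mb)\right]\right|\le \frac{(mb-a)^4}{96}\left(\frac{\Gamma(2p+1)\Gamma(p+1)}{\Gamma(3p+2)}\right)^{1/p}\left\{\left[\frac{|f'''(a)|^q+m\,[2^\alpha(1+\alpha)-1]\,|f'''(b)|^q}{2^\alpha(1+\alpha)}\right]^{1/q}+\left[\frac{(2^{1+\alpha}-1)|f'''(a)|^q+m\,[2^\alpha(1+\alpha)-(2^{1+\alpha}-1)]\,|f'''(b)|^q}{2^\alpha(1+\alpha)}\right]^{1/q}\right\},$$ where $\Gamma$ is the Gamma function.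
   Context: For $(\alpha,m)\in[0,1]^2$ and $b^*>0$, a function $g:[0,b^*]\to\mathbb{R}$ is called $(\alpha,m)$-convex on $[0,b^*]$ if for all $x,y\in[0,b^*]$ and $t\in[0,1]$, $$g(tx+m(1-t)y)\le t^\alpha g(x)+m(1-t^\alpha)g(y).$$ *)

From Stdlib Require Import Reals Lra ClassicalEpsilon.
Open Scope R_scope.

(* Real power with nonnegative base: x^y for x >= 0, with 0^0 = 1 and
   0^y = 0 for y <> 0 (Stdlib's Rpower is only meaningful for x > 0). *)
Definition powR (x y : R) : R :=
  if Req_EM_T x 0 then (if Req_EM_T y 0 then 1 else 0) else Rpower x y.

Definition alpha_m_convex (alpha m bstar : R) (g : R -> R) : Prop :=
  forall x y t, 0 <= x <= bstar -> 0 <= y <= bstar -> 0 <= t <= 1 ->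
    g (t * x + m * (1 - t) * y)
      <= powR t alpha * g x + m * (1 - powR t alpha) * g y.

Definition gamma_integrand (s : R) (t : R) : R :=
  if Rle_dec t 0 then 0 else Rpower t (s - 1) * exp (- t).

(* g = Gamma(s) = lim_{X -> +oo} int_0^X t^(s-1) e^(-t) dt  (Riemann integrals;
   adequate for s >= 1, which is the only range used below). *)
Definition is_Gamma (s g : R) : Prop :=
  forall eps, 0 < eps -> exists X0, forall X, X0 <= X ->
    exists pr : Riemann_integrable (gamma_integrand s) 0 X,
      Rabs (RiemannInt pr - g) < eps.

Definition Gamma (s : R) : R :=
  epsilon (inhabits 0) (fun g => is_Gamma s g).

(* Write v = m b, h = (v - a)/2, c = (a + v)/2 and let F be a primitive of f.
   The function
     phi_h(s) = h^3 K0(s) f''(c+sh) - h^2 K1(s) f'(c+sh) + h K2(s) f(c+sh) + F(c+sh)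
   has derivative h^4 K0(s) f'''(c+sh) with |K0(s)| = s(1-s)^2/6, and the
   Simpson error  int_a^v f - (v-a)/6 (f(a) + 4 f(c) + f(v))  equals
   [phi_h]_0^1 - [phi_{-h}]_0^1.  Each bracket is bounded in Hölder fashion
   without ever integrating f''': Young's inequality with a free parameter
   l > 0 bounds phi' pointwise by the derivative of an explicit function, the
   bound is transported to the increments by monotonicity, and optimising l
   gives  h^4/6 * B(p+1,2p+1)^(1/p) * (G(1) - G(0))^(1/q),  where G is a
   primitive of the (alpha,m)-convexity bound of |f'''(c+sh)|^q.  Finally
   B(p+1,2p+1) Gamma(3p+2) <= Gamma(p+1) Gamma(2p+1). *)

From Stdlib Require Import Reals Lra Psatz ClassicalEpsilon FunctionalExtensionality.
From Coquelicot Require Import Coquelicot.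
Open Scope R_scope.

(** * A total real power *)

(* [rpow u y] is u^y for u > 0 and 0 for u <= 0.  Unlike [powR] it satisfies
   u^(y+1) = u * u^y for every u, which suits the Beta and Gamma integrands. *)
Definition rpow (u y : R) : R := if Rle_dec u 0 then 0 else Rpower u y.

Lemma rpow_pos u y : 0 < u -> rpow u y = Rpower u y.
Proof. intros H; unfold rpow; destruct (Rle_dec u 0); [lra|auto]. Qed.

Lemma rpow_npos u y : u <= 0 -> rpow u y = 0.
Proof. intros H; unfold rpow; destruct (Rle_dec u 0); [auto|lra]. Qed.

Lemma rpow_ge0 u y : 0 <= rpow u y.
Proof. unfold rpow; destruct (Rle_dec u 0); [lra|]. unfold Rpower; left; apply exp_pos. Qed.

Lemma rpow_gt0 u y : 0 < u -> 0 < rpow u y.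
Proof. intros H; rewrite rpow_pos by auto; unfold Rpower; apply exp_pos. Qed.

Lemma rpow_S u y : rpow u (y + 1) = u * rpow u y.
Proof.
  unfold rpow; destruct (Rle_dec u 0); [ring|].
  rewrite Rpower_plus, Rpower_1 by lra; ring.
Qed.

Lemma rpow_mult u v y : 0 <= u -> 0 <= v -> rpow (u * v) y = rpow u y * rpow v y.
Proof.
  intros Hu Hv.
  destruct (Req_dec u 0) as [->|Hu']; [rewrite Rmult_0_l, !rpow_npos by lra; ring|].
  destruct (Req_dec v 0) as [->|Hv']; [rewrite Rmult_0_r, !rpow_npos by lra; ring|].
  rewrite !rpow_pos by nra. symmetry; apply Rpower_mult_distr; lra.
Qed.

Lemma rpow_plus u x y : rpow u (x + y) = rpow u x * rpow u y.
Proof. unfold rpow; destruct (Rle_dec u 0); [ring|]. apply Rpower_plus. Qed.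

(* On nonnegative bases and nonzero exponents the two powers agree ... *)
Lemma rpow_powR u y : 0 <= u -> y <> 0 -> powR u y = rpow u y.
Proof.
  intros Hu Hy; unfold powR, rpow.
  destruct (Req_EM_T u 0); destruct (Rle_dec u 0); try lra.
  destruct (Req_EM_T y 0); lra.
Qed.

Lemma powR_pos u y : 0 < u -> powR u y = rpow u y.
Proof. intros H. unfold powR, rpow. destruct (Req_EM_T u 0); destruct (Rle_dec u 0); lra. Qed.

Lemma powR_ge0 x y : 0 <= powR x y.
Proof.
  unfold powR. destruct (Req_EM_T x 0); [destruct (Req_EM_T y 0); lra|].
  unfold Rpower; left; apply exp_pos.
Qed.

(* ... and for nonzero exponents [rpow] never exceeds [powR] (on negative
   bases [powR] is the positive number exp(y ln u)). *)
Lemma rpow_le_powR u y : y <> 0 -> rpow u y <= powR u y.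
Proof.
  intros Hy. destruct (Rle_dec u 0) as [Hu|Hu].
  - rewrite rpow_npos by lra. apply powR_ge0.
  - rewrite powR_pos by lra. lra.
Qed.

Lemma rpow_le_l u v y : 0 <= y -> 0 <= u <= v -> rpow u y <= rpow v y.
Proof.
  intros Hy Huv. destruct (Req_dec u 0) as [->|Hu].
  - rewrite rpow_npos by lra. apply rpow_ge0.
  - rewrite !rpow_pos by lra. apply Rle_Rpower_l; lra.
Qed.

Lemma rpow_is_derive u y : 0 < u -> is_derive (fun v => rpow v y) u (y * rpow u (y - 1)).
Proof.
  intros H. rewrite rpow_pos by auto.
  apply is_derive_ext_loc with (fun v => Rpower v y).
  - exists (mkposreal u H). intros v Hv. unfold ball in Hv; simpl in Hv.
    unfold AbsRing_ball, abs, minus, plus, opp in Hv; simpl in Hv.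
    apply Rabs_def2 in Hv. rewrite rpow_pos; auto; lra.
  - apply is_derive_Reals. apply derivable_pt_lim_power; auto.
Qed.

Lemma rpow_continuous u y : 0 < y -> continuous (fun v => rpow v y) u.
Proof.
  intros Hy. destruct (Rlt_le_dec 0 u) as [Hu|Hu].
  - apply continuity_pt_filterlim. apply derivable_continuous_pt.
    exists (y * rpow u (y - 1)). apply is_derive_Reals, rpow_is_derive; auto.
  - destruct (Rlt_le_dec u 0) as [Hu'|Hu'].
    + apply continuous_ext_loc with (fun _ => 0); [|apply continuous_const].
      assert (Hp : 0 < - u) by lra. exists (mkposreal _ Hp). intros v Hv.
      unfold ball in Hv; simpl in Hv. unfold AbsRing_ball, abs, minus, plus, opp in Hv; simpl in Hv.
      apply Rabs_def2 in Hv. rewrite rpow_npos; auto; lra.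
    + assert (u = 0) by lra; subst u.
      apply continuity_pt_filterlim. intros e He.
      exists (Rpower e (/ y)). split; [unfold Rpower; apply exp_pos|].
      intros v [_ Hv]. rewrite (rpow_npos 0) by lra.
      unfold dist in Hv |- *; simpl in Hv |- *. unfold R_dist in *.
      rewrite Rminus_0_r in *.
      unfold rpow; destruct (Rle_dec v 0); [rewrite Rabs_R0; lra|].
      rewrite Rabs_pos_eq by (unfold Rpower; left; apply exp_pos).
      rewrite Rabs_pos_eq in Hv by lra.
      unfold Rpower in *. assert (ln v < / y * ln e).
      { rewrite <- (ln_exp (/ y * ln e)). apply ln_increasing; lra. }
      rewrite <- (exp_ln e) by lra.
      apply exp_increasing. replace (ln e) with (y * (/ y * ln e)) by (field; lra).
      apply Rmult_lt_compat_l; lra.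
Qed.

Lemma le_of_deriv_nonneg (g dg : R -> R) a b : a <= b ->
  (forall x, a < x < b -> is_derive g x (dg x)) ->
  (forall x, a <= x <= b -> continuity_pt g x) ->
  (forall x, a < x < b -> 0 <= dg x) -> g a <= g b.
Proof.
  intros Hab Hd Hc Hp. destruct (Req_dec a b) as [->|Hne]; [lra|].
  assert (Hlt : a < b) by lra.
  pose (pr1 := fun c (P : a < c < b) =>
    exist (fun l => derivable_pt_lim g c l) (dg c) (proj1 (is_derive_Reals g c (dg c)) (Hd c P))).
  pose (pr2 := fun c (P : a < c < b) => derivable_pt_id c).
  destruct (MVT g id a b pr1 pr2 Hlt Hc) as [c [P HM]].
  { intros; apply derivable_continuous_pt, derivable_pt_id. }
  rewrite derive_pt_id in HM. unfold pr1 in HM; simpl in HM. unfold id in HM.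
  specialize (Hp c P). nra.
Qed.

Lemma is_derive_RInt_upper (g : R -> R) (a x : R) :
  (forall y, continuous g y) -> is_derive (fun y => RInt g a y) x (g x).
Proof.
  intros Hg. apply (is_derive_RInt (V := R_CompleteNormedModule)) with a; [|apply Hg].
  exists (mkposreal 1 Rlt_0_1). intros y _.
  apply RInt_correct, (ex_RInt_continuous (V := R_CompleteNormedModule)). intros; apply Hg.
Qed.

Lemma continuity_RInt_upper (g : R -> R) (a x : R) :
  (forall y, continuous g y) -> continuity_pt (fun y => RInt g a y) x.
Proof.
  intros Hg. apply derivable_continuous_pt. exists (g x).
  apply is_derive_Reals, is_derive_RInt_upper; auto.
Qed.

Lemma RInt_primitive_eq (F g : R -> R) a b : a <= b ->
  (forall x, a < x < b -> is_derive F x (g x)) ->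
  (forall x, a <= x <= b -> continuity_pt F x) ->
  (forall x, continuous g x) -> RInt g a b = F b - F a.
Proof.
  intros Hab Hd Hc Hg.
  pose (G := fun x => RInt g a x - F x).
  assert (HD : forall x, a < x < b -> is_derive G x 0).
  { intros x Hx. unfold G. replace 0 with (g x - g x) by ring.
    apply is_derive_Reals. apply (derivable_pt_lim_minus (fun y => RInt g a y) F).
    - apply is_derive_Reals, is_derive_RInt_upper; auto.
    - apply is_derive_Reals, Hd; auto. }
  assert (HC : forall x, a <= x <= b -> continuity_pt G x).
  { intros x Hx. apply continuity_pt_minus; [apply continuity_RInt_upper|]; auto. }
  assert (H1 : G a <= G b) by (apply (le_of_deriv_nonneg G (fun _ => 0)); auto; intros; lra).
  assert (H2 : (fun x => - G x) a <= (fun x => - G x) b).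
  { apply (le_of_deriv_nonneg (fun x => - G x) (fun _ => - 0)); auto.
    - intros x Hx. apply is_derive_Reals, (derivable_pt_lim_opp G), is_derive_Reals; auto.
    - intros; apply continuity_pt_opp; auto.
    - intros; lra. }
  simpl in H2. unfold G in H1, H2. rewrite RInt_point in H1, H2.
  unfold zero in *; simpl in *. lra.
Qed.

Lemma RInt_lin2 (f g : R -> R) c1 c2 a b : ex_RInt f a b -> ex_RInt g a b ->
  RInt (fun t => c1 * f t + c2 * g t) a b = c1 * RInt f a b + c2 * RInt g a b.
Proof.
  intros Hf Hg. apply is_RInt_unique.
  apply (is_RInt_plus (V := R_CompleteNormedModule) (fun t => c1 * f t) (fun t => c2 * g t));
    apply (is_RInt_scal (V := R_CompleteNormedModule)), RInt_correct; auto.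
Qed.

Lemma exp_le a b : a <= b -> exp a <= exp b.
Proof. intros H. destruct (Req_dec a b) as [->|H']; [lra|]. left; apply exp_increasing; lra. Qed.

Lemma pow4_ge0 x : 0 <= x ^ 4.
Proof. replace (x ^ 4) with ((x ^ 2) ^ 2) by ring. apply pow2_ge_0. Qed.

(* Convexity of exp, from exp(u) >= 1 + u at the barycentre. *)
Lemma exp_convex t x y : 0 <= t <= 1 ->
  exp (t * x + (1 - t) * y) <= t * exp x + (1 - t) * exp y.
Proof.
  intros Ht. set (c := t * x + (1 - t) * y).
  assert (Ex : exp x = exp c * exp (x - c)) by (rewrite <- exp_plus; f_equal; unfold c; ring).
  assert (Ey : exp y = exp c * exp (y - c)) by (rewrite <- exp_plus; f_equal; unfold c; ring).
  pose proof (exp_ineq1_le (x - c)). pose proof (exp_ineq1_le (y - c)). pose proof (exp_pos c).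
  assert (Hx : exp c * (1 + (x - c)) <= exp c * exp (x - c)) by (apply Rmult_le_compat_l; lra).
  assert (Hy : exp c * (1 + (y - c)) <= exp c * exp (y - c)) by (apply Rmult_le_compat_l; lra).
  assert (Hw : t * (1 + (x - c)) + (1 - t) * (1 + (y - c)) = 1) by (unfold c; ring).
  rewrite Ex, Ey. nra.
Qed.

Lemma young a b p q : 0 <= a -> 0 <= b -> 0 < p -> 0 < q -> 1 / p + 1 / q = 1 ->
  a * b <= rpow a p / p + rpow b q / q.
Proof.
  intros Ha Hb Hp Hq Hpq.
  assert (0 <= rpow a p / p) by (apply Rdiv_le_0_compat; [apply rpow_ge0|lra]).
  assert (0 <= rpow b q / q) by (apply Rdiv_le_0_compat; [apply rpow_ge0|lra]).
  destruct (Req_dec a 0) as [->|Ha']; [lra|].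
  destruct (Req_dec b 0) as [->|Hb']; [lra|].
  rewrite !rpow_pos by lra. unfold Rpower.
  assert (E : a * b = exp ((1/p) * (p * ln a) + (1 - 1/p) * (q * ln b))).
  { replace ((1/p) * (p * ln a) + (1 - 1/p) * (q * ln b)) with (ln a + ln b).
    - rewrite exp_plus, !exp_ln by lra. auto.
    - replace (1 - 1/p) with (1/q) by lra. field; lra. }
  rewrite E.
  assert (0 < 1/p) by (apply Rdiv_lt_0_compat; lra).
  assert (0 < 1/q) by (apply Rdiv_lt_0_compat; lra).
  eapply Rle_trans; [apply exp_convex; lra|].
  replace (1 - 1/p) with (1/q) by lra. lra.
Qed.

Lemma conjugate_exponent_gt1 p q : 1 < q -> 1 / p + 1 / q = 1 -> 1 < p.
Proof.
  intros Hq Hpq.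
  assert (H1 : 0 < 1 / q < 1).
  { split; [apply Rdiv_lt_0_compat; lra|].
    apply (Rmult_lt_reg_r q); [lra|]. field_simplify; lra. }
  assert (H2 : 0 < 1 / p < 1) by lra.
  destruct (Rlt_le_dec 0 p) as [Hp0|Hp0].
  - apply (Rmult_lt_reg_r (1 / p)); [lra|]. replace (p * (1 / p)) with 1 by (field; lra). lra.
  - destruct (Req_dec p 0) as [->|Hpn]; [unfold Rdiv in H2; rewrite Rinv_0 in H2; lra|].
    assert (1 / p < 0) by (unfold Rdiv; rewrite Rmult_1_l; apply Rinv_lt_0_compat; lra). lra.
Qed.

Lemma pow_le_fact_exp n t : 0 <= t -> (1 + t) ^ n <= INR (Factorial.fact n) * exp t.
Proof.
  revert t. induction n as [|n IH]; intros t Ht.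
  - simpl. pose proof (exp_ineq1_le t). lra.
  - pose (g := fun u => INR (Factorial.fact (S n)) * exp u - (1 + u) ^ (S n)).
    assert (Hg : g 0 <= g t).
    { apply (le_of_deriv_nonneg g (fun u => INR (Factorial.fact (S n)) * exp u - INR (S n) * (1 + u) ^ n)); auto.
      - intros x Hx. unfold g. auto_derive; auto. simpl. ring.
      - intros x Hx. unfold g. apply derivable_continuous_pt. eexists. apply is_derive_Reals. auto_derive; auto.
      - intros x Hx. rewrite fact_simpl, mult_INR.
        specialize (IH x ltac:(lra)). pose proof (pos_INR (S n)). nra. }
    unfold g in Hg. rewrite exp_0, Rplus_0_r, pow1 in Hg.
    assert (1 <= INR (Factorial.fact (S n))) by (apply (le_INR 1); apply Factorial.lt_O_fact).
    lra.
Qed.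

Lemma exists_nat_ge r : exists K : nat, r <= INR K.
Proof.
  destruct (Rle_dec r 0); [exists 0%nat; simpl; lra|].
  destruct (nfloor_ex r ltac:(lra)) as [k Hk]. exists (S k). rewrite S_INR; lra.
Qed.

(** * The Gamma function *)

Definition gamma_kernel (s t : R) : R := rpow t (s - 1) * exp (- t).

Definition gamma_partial (s X : R) : R := RInt (gamma_kernel s) 0 X.

Lemma gamma_integrand_eq s : gamma_integrand s = gamma_kernel s.
Proof.
  apply functional_extensionality; intro t.
  unfold gamma_integrand, gamma_kernel, rpow. destruct (Rle_dec t 0); ring.
Qed.

Lemma exp_opp_continuous t : continuous (fun t => exp (- t)) t.
Proof.
  apply continuity_pt_filterlim, derivable_continuous_pt.
  eexists. apply is_derive_Reals. auto_derive; auto.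
Qed.

Lemma gamma_kernel_continuous s t : 1 < s -> continuous (gamma_kernel s) t.
Proof.
  intros Hs. apply (continuous_mult (fun t => rpow t (s - 1)) (fun t => exp (- t))).
  - apply rpow_continuous; lra.
  - apply exp_opp_continuous.
Qed.

Lemma gamma_kernel_ge0 s t : 0 <= gamma_kernel s t.
Proof. apply Rmult_le_pos; [apply rpow_ge0|left; apply exp_pos]. Qed.

Lemma gamma_kernel_ex s a b : 1 < s -> ex_RInt (gamma_kernel s) a b.
Proof.
  intros Hs. apply (ex_RInt_continuous (V := R_CompleteNormedModule)).
  intros; apply gamma_kernel_continuous; auto.
Qed.

Lemma gamma_partial_mono s X Y : 1 < s -> 0 <= X <= Y -> gamma_partial s X <= gamma_partial s Y.
Proof.
  intros Hs HXY. unfold gamma_partial.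
  rewrite <- (RInt_Chasles (V := R_CompleteNormedModule) (gamma_kernel s) 0 X Y)
    by (apply gamma_kernel_ex; auto).
  assert (0 <= RInt (gamma_kernel s) X Y)
    by (apply RInt_ge_0; [lra|apply gamma_kernel_ex; auto|intros; apply gamma_kernel_ge0]).
  unfold plus; simpl. lra.
Qed.

Lemma rpow_exp_poly_bound z K j t : 0 <= z <= INR K -> 0 <= t ->
  rpow t z * exp (- t) * (1 + t) ^ j <= INR (Factorial.fact (K + j)).
Proof.
  intros Hz Ht. pose proof (INR_fact_lt_0 (K + j)) as Hf.
  destruct (Req_dec t 0) as [->|Ht0].
  { rewrite rpow_npos by lra. lra. }
  assert (H1 : rpow t z <= (1 + t) ^ K).
  { rewrite rpow_pos by lra. eapply Rle_trans; [apply (Rle_Rpower_l t (1 + t) z); lra|].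
    rewrite <- Rpower_pow by lra. apply Rle_Rpower; lra. }
  pose proof (pow_le_fact_exp (K + j) t Ht) as H2. rewrite pow_add in H2.
  pose proof (exp_pos (- t)). pose proof (rpow_ge0 t z).
  assert (Hj : 0 < (1 + t) ^ j) by (apply pow_lt; lra).
  assert (He : exp t * exp (- t) = 1) by (rewrite <- exp_plus, Rplus_opp_r, exp_0; auto).
  apply Rle_trans with ((1 + t) ^ K * (1 + t) ^ j * exp (- t)).
  - replace (rpow t z * exp (- t) * (1 + t) ^ j) with (rpow t z * (1 + t) ^ j * exp (- t)) by ring.
    apply Rmult_le_compat_r; [lra|]. apply Rmult_le_compat_r; lra.
  - apply Rle_trans with (INR (Factorial.fact (K + j)) * exp t * exp (- t)).
    + apply Rmult_le_compat_r; lra.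
    + rewrite Rmult_assoc, He. lra.
Qed.

(* The partial Gamma integrals are bounded, via t^(s-1) e^(-t) <= C/(1+t)^2. *)
Lemma gamma_partial_bounded s : 1 < s -> exists M, forall X, 0 <= X -> gamma_partial s X <= M.
Proof.
  intros Hs. destruct (exists_nat_ge (s - 1)) as [K HK].
  set (C := INR (Factorial.fact (K + 2))).
  assert (HC : 0 < C) by apply INR_fact_lt_0.
  exists C. intros X HX.
  assert (Hi : is_RInt (fun t => C / (1 + t) ^ 2) 0 X
                 (minus ((fun t => - C / (1 + t)) X) ((fun t => - C / (1 + t)) 0))).
  { apply (is_RInt_derive (V := R_CompleteNormedModule) (fun t => - C / (1 + t))).
    - intros x Hx. rewrite Rmin_left, Rmax_right in Hx by lra. auto_derive; [lra|]. field. lra.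
    - intros x Hx. rewrite Rmin_left, Rmax_right in Hx by lra.
      apply continuity_pt_filterlim, derivable_continuous_pt. eexists. apply is_derive_Reals.
      auto_derive; [|reflexivity]. rewrite Rmult_1_r. apply Rmult_integral_contrapositive; split; lra. }
  unfold gamma_partial. eapply Rle_trans.
  - apply RInt_le with (g := fun t => C / (1 + t) ^ 2); [lra|apply gamma_kernel_ex; auto|eexists; apply Hi|].
    intros t Ht. pose proof (rpow_exp_poly_bound (s - 1) K 2 t ltac:(lra) ltac:(lra)).
    assert (0 < (1 + t) ^ 2) by (apply pow_lt; lra).
    apply (Rmult_le_reg_r ((1 + t) ^ 2)); auto. unfold gamma_kernel, C.
    field_simplify; lra.
  - rewrite (is_RInt_unique _ _ _ _ Hi). unfold minus, plus, opp; simpl.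
    assert (0 < C / (1 + X)) by (apply Rdiv_lt_0_compat; lra).
    replace (- C / (1 + X) + - (- C / (1 + 0))) with (C - C / (1 + X)) by (field; lra). lra.
Qed.

Lemma is_Gamma_unique s g1 g2 : is_Gamma s g1 -> is_Gamma s g2 -> g1 = g2.
Proof.
  intros H1 H2. destruct (Req_dec g1 g2) as [|Hne]; auto. exfalso.
  set (e := Rabs (g1 - g2) / 2).
  assert (He : 0 < e) by (unfold e; pose proof (Rabs_pos_lt (g1 - g2)); lra).
  destruct (H1 e He) as [X1 HX1]. destruct (H2 e He) as [X2 HX2].
  destruct (HX1 (Rmax X1 X2) (Rmax_l _ _)) as [pr1 Hp1].
  destruct (HX2 (Rmax X1 X2) (Rmax_r _ _)) as [pr2 Hp2].
  rewrite (RiemannInt_P5 pr1 pr2) in Hp1.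
  assert (Rabs (g1 - g2) <= Rabs (RiemannInt pr2 - g1) + Rabs (RiemannInt pr2 - g2)).
  { replace (g1 - g2) with (- (RiemannInt pr2 - g1) + (RiemannInt pr2 - g2)) by ring.
    eapply Rle_trans; [apply Rabs_triang|]. rewrite Rabs_Ropp. lra. }
  unfold e in *. lra.
Qed.

Lemma Gamma_spec s : 1 < s ->
  (forall X, 0 <= X -> gamma_partial s X <= Gamma s) /\
  (forall e, 0 < e -> exists X, 0 <= X /\ Gamma s - e < gamma_partial s X).
Proof.
  intros Hs.
  set (E := fun v => exists X, 0 <= X /\ v = gamma_partial s X).
  destruct (gamma_partial_bounded s Hs) as [M HM].
  assert (Hb : bound E) by (exists M; intros v [X [HX ->]]; apply HM; auto).
  assert (Hne : exists v, E v) by (exists (gamma_partial s 0), 0; split; [lra|auto]).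
  destruct (completeness E Hb Hne) as [L [HL1 HL2]].
  assert (C1 : forall X, 0 <= X -> gamma_partial s X <= L) by (intros X HX; apply HL1; exists X; auto).
  assert (C2 : forall e, 0 < e -> exists X, 0 <= X /\ L - e < gamma_partial s X).
  { intros e He. apply NNPP. intros Hn.
    assert (L <= L - e); [|lra]. apply HL2. intros v [X [HX ->]].
    apply Rnot_lt_le. intros Hc. apply Hn. exists X; auto. }
  assert (HG : is_Gamma s L).
  { intros e He. destruct (C2 e He) as [X0 [HX0 HX0']]. exists X0. intros X HX.
    assert (Hex : ex_RInt (gamma_integrand s) 0 X)
      by (rewrite gamma_integrand_eq; apply gamma_kernel_ex; auto).
    exists (ex_RInt_Reals_0 _ _ _ Hex). rewrite <- RInt_Reals, gamma_integrand_eq.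
    fold (gamma_partial s X).
    pose proof (gamma_partial_mono s X0 X Hs ltac:(lra)). pose proof (C1 X ltac:(lra)).
    rewrite Rabs_left1 by lra. lra. }
  replace (Gamma s) with L; [split; auto|].
  unfold Gamma. apply (is_Gamma_unique s); auto. apply epsilon_spec. exists L; auto.
Qed.

Lemma Gamma_le_combination s s1 s2 c1 c2 : 1 < s -> 1 < s1 -> 1 < s2 -> 0 <= c1 -> 0 <= c2 ->
  (forall t, gamma_kernel s t <= c1 * gamma_kernel s1 t + c2 * gamma_kernel s2 t) ->
  Gamma s <= c1 * Gamma s1 + c2 * Gamma s2.
Proof.
  intros Hs Hs1 Hs2 Hc1 Hc2 Hpt.
  destruct (Gamma_spec s1 Hs1) as [G1 _]. destruct (Gamma_spec s2 Hs2) as [G2 _].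
  apply le_epsilon. intros e He. destruct (Gamma_spec s Hs) as [_ G].
  destruct (G e He) as [X [HX HX']].
  assert (HI : gamma_partial s X <= c1 * gamma_partial s1 X + c2 * gamma_partial s2 X).
  { unfold gamma_partial. rewrite <- RInt_lin2 by (apply gamma_kernel_ex; lra).
    apply RInt_le; auto; [apply gamma_kernel_ex; lra|].
    apply (ex_RInt_continuous (V := R_CompleteNormedModule)). intros.
    apply (continuous_plus (fun t => c1 * gamma_kernel s1 t) (fun t => c2 * gamma_kernel s2 t)).
    - apply (continuous_mult (fun _ => c1) (gamma_kernel s1)); [apply continuous_const|].
      apply gamma_kernel_continuous; lra.
    - apply (continuous_mult (fun _ => c2) (gamma_kernel s2)); [apply continuous_const|].
      apply gamma_kernel_continuous; lra. }
  specialize (G1 X HX). specialize (G2 X HX). nra.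
Qed.

(* Gamma(s) > 0, since the integrand is at least e^(-2) on [1,2]. *)
Lemma Gamma_pos s : 1 < s -> 0 < Gamma s.
Proof.
  intros Hs. destruct (Gamma_spec s Hs) as [H1 _].
  assert (HI : 0 < gamma_partial s 2).
  { unfold gamma_partial.
    rewrite <- (RInt_Chasles (V := R_CompleteNormedModule) (gamma_kernel s) 0 1 2)
      by (apply gamma_kernel_ex; auto).
    assert (0 <= RInt (gamma_kernel s) 0 1)
      by (apply RInt_ge_0; [lra|apply gamma_kernel_ex; auto|intros; apply gamma_kernel_ge0]).
    assert (exp (-2) <= RInt (gamma_kernel s) 1 2).
    { replace (exp (-2)) with (RInt (fun _ => exp (-2)) 1 2).
      - apply RInt_le; [lra|apply ex_RInt_const|apply gamma_kernel_ex; auto|].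
        intros x Hx. unfold gamma_kernel. rewrite rpow_pos by lra.
        assert (1 <= Rpower x (s - 1)).
        { unfold Rpower. assert (0 < ln x) by (rewrite <- ln_1; apply ln_increasing; lra).
          pose proof (exp_ineq1_le ((s - 1) * ln x)). nra. }
        assert (exp (-2) <= exp (- x)) by (apply exp_le; lra).
        pose proof (exp_pos (- x)). nra.
      - rewrite RInt_const. unfold scal; simpl; unfold mult; simpl. ring. }
    unfold plus; simpl. pose proof (exp_pos (-2)). lra. }
  specialize (H1 2 ltac:(lra)). lra.
Qed.

Lemma rpow_exp_tail z : 1 < z -> forall e, 0 < e -> exists X0, 0 <= X0 /\
  forall X, X0 <= X -> rpow X z * exp (- X) <= e.
Proof.
  intros Hz e He. destruct (exists_nat_ge z) as [K HK].
  set (C := INR (Factorial.fact (K + 1))). assert (HC : 0 < C) by apply INR_fact_lt_0.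
  exists (C / e). split; [apply Rdiv_le_0_compat; lra|].
  intros X HX. assert (HCe : 0 < C / e) by (apply Rdiv_lt_0_compat; lra).
  pose proof (rpow_exp_poly_bound z K 1 X ltac:(lra) ltac:(lra)) as Hb. fold C in Hb.
  rewrite pow_1 in Hb.
  assert (Hc : C / e * e = C) by (field; lra).
  pose proof (rpow_ge0 X z). pose proof (exp_pos (- X)). nra.
Qed.

Lemma gamma_partial_rec z X : 1 < z -> 0 <= X ->
  gamma_partial (z + 1) X = z * gamma_partial z X - rpow X z * exp (- X).
Proof.
  intros Hz HX.
  assert (H : RInt (fun t => 1 * gamma_kernel (z + 1) t + (- z) * gamma_kernel z t) 0 X
              = (fun t => - rpow t z * exp (- t)) X - (fun t => - rpow t z * exp (- t)) 0).
  { apply (RInt_primitive_eq (fun t => - rpow t z * exp (- t))); auto.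
    - intros t Ht. unfold gamma_kernel. apply is_derive_Reals.
      replace (1 * (rpow t (z + 1 - 1) * exp (- t)) + - z * (rpow t (z - 1) * exp (- t)))
        with (- (z * rpow t (z - 1)) * exp (- t) + (- rpow t z) * (- exp (- t)))
        by (replace (z + 1 - 1) with z by ring; ring).
      apply (derivable_pt_lim_mult (fun t => - rpow t z) (fun t => exp (- t))).
      + apply (derivable_pt_lim_opp (fun t => rpow t z)), is_derive_Reals, rpow_is_derive; lra.
      + apply is_derive_Reals. auto_derive; auto. ring.
    - intros t Ht. apply continuity_pt_filterlim.
      apply (continuous_mult (fun t => - rpow t z) (fun t => exp (- t))).
      + apply (continuous_opp (fun t => rpow t z)), rpow_continuous; lra.
      + apply exp_opp_continuous.
    - intros t. apply (continuous_plus (fun t => 1 * gamma_kernel (z + 1) t) (fun t => - z * gamma_kernel z t)).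
      + apply (continuous_mult (fun _ => 1) (gamma_kernel (z + 1))); [apply continuous_const|].
        apply gamma_kernel_continuous; lra.
      + apply (continuous_mult (fun _ => - z) (gamma_kernel z)); [apply continuous_const|].
        apply gamma_kernel_continuous; lra. }
  rewrite RInt_lin2 in H by (apply gamma_kernel_ex; lra).
  simpl in H. rewrite (rpow_npos 0) in H by lra. unfold gamma_partial. lra.
Qed.

(* The functional equation Gamma(z+1) = z Gamma(z), letting X -> oo in
   gamma_partial_rec. *)
Lemma Gamma_rec z : 1 < z -> Gamma (z + 1) = z * Gamma z.
Proof.
  intros Hz. assert (Hz1 : 1 < z + 1) by lra.
  destruct (Gamma_spec z Hz) as [A1 A2]. destruct (Gamma_spec (z + 1) Hz1) as [B1 B2].
  apply Rle_antisym; apply le_epsilon; intros e He.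
  - destruct (B2 e He) as [X [HX HX']].
    rewrite gamma_partial_rec in HX' by lra. pose proof (A1 X HX).
    assert (0 <= rpow X z * exp (- X)) by (apply Rmult_le_pos; [apply rpow_ge0|left; apply exp_pos]).
    nra.
  - assert (He' : 0 < e / (z + 1)) by (apply Rdiv_lt_0_compat; lra).
    destruct (A2 _ He') as [X1 [HX1 HX1']]. destruct (rpow_exp_tail z Hz _ He') as [X2 [HX2 HX2']].
    set (X := Rmax X1 X2).
    assert (HX0 : X1 <= X) by apply Rmax_l.
    pose proof (gamma_partial_mono z X1 X Hz ltac:(lra)).
    pose proof (HX2' X (Rmax_r _ _)). pose proof (B1 X ltac:(lra)).
    rewrite gamma_partial_rec in H1 by lra.
    assert (z * (Gamma z - e / (z + 1)) < z * gamma_partial z X) by (apply Rmult_lt_compat_l; lra).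
    assert (e = z * (e / (z + 1)) + e / (z + 1)) by (field; lra).
    lra.
Qed.

Lemma Gamma_shift_nat N k : 1 < N -> Gamma (N + INR k) <= (N + INR k) ^ k * Gamma N.
Proof.
  intros HN. induction k as [|k IH].
  - simpl. rewrite Rplus_0_r. lra.
  - rewrite S_INR. replace (N + (INR k + 1)) with ((N + INR k) + 1) by ring.
    pose proof (pos_INR k).
    rewrite Gamma_rec by lra. simpl.
    pose proof (Gamma_pos N HN). pose proof (Gamma_pos (N + INR k) ltac:(lra)).
    assert ((N + INR k) ^ k <= (N + INR k + 1) ^ k) by (apply pow_incr; lra).
    assert (0 <= (N + INR k) ^ k) by (apply pow_le; lra).
    assert (Gamma (N + INR k) <= (N + INR k + 1) ^ k * Gamma N) by nra.
    nra.
Qed.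

(* Log-convexity of Gamma between N and N + K gives, for 0 < x < K,
   Gamma(N + x) <= (N + K)^x Gamma(N). *)
Lemma Gamma_shift_le N x K : 1 < N -> 0 < x < INR K ->
  Gamma (N + x) <= rpow (N + INR K) x * Gamma N.
Proof.
  intros HN Hx.
  set (th := x / INR K). assert (Hth : 0 < th < 1).
  { unfold th. split; [apply Rdiv_lt_0_compat; lra|].
    apply (Rmult_lt_reg_r (INR K)); [lra|]. field_simplify; lra. }
  set (l := ln (N + INR K)).
  set (c1 := (1 - th) * exp (x * l)). set (c2 := th * exp ((x - INR K) * l)).
  assert (Hc1 : 0 <= c1) by (unfold c1; pose proof (exp_pos (x * l)); nra).
  assert (Hc2 : 0 <= c2) by (unfold c2; pose proof (exp_pos ((x - INR K) * l)); nra).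
  assert (HG : Gamma (N + x) <= c1 * Gamma N + c2 * Gamma (N + INR K)).
  { apply Gamma_le_combination; auto; try lra. intros t.
    unfold gamma_kernel. destruct (Rle_dec t 0); [rewrite !rpow_npos by auto; lra|].
    rewrite !rpow_pos by lra. unfold Rpower. rewrite <- !exp_plus.
    set (A := (N - 1) * ln t + - t). set (B := (N + INR K - 1) * ln t + - t).
    replace ((N + x - 1) * ln t + - t)
      with ((1 - th) * (A + x * l) + (1 - (1 - th)) * (B + (x - INR K) * l)).
    2:{ assert (Ex : x = th * INR K) by (unfold th; field; lra). unfold A, B. rewrite Ex. ring. }
    eapply Rle_trans; [apply exp_convex; lra|].
    unfold c1, c2. rewrite !exp_plus. replace (1 - (1 - th)) with th by ring. unfold A, B.
    rewrite !exp_plus. right. ring. }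
  pose proof (Gamma_shift_nat N K HN).
  assert (Hpow : (N + INR K) ^ K = exp (INR K * l)) by (rewrite <- Rpower_pow by lra; reflexivity).
  assert (c1 * Gamma N + c2 * Gamma (N + INR K) <= c1 * Gamma N + c2 * ((N + INR K) ^ K * Gamma N))
    by (apply Rplus_le_compat_l, Rmult_le_compat_l; auto).
  assert (c1 * Gamma N + c2 * ((N + INR K) ^ K * Gamma N) = rpow (N + INR K) x * Gamma N).
  { rewrite Hpow. unfold c1, c2. rewrite rpow_pos by lra. unfold Rpower. fold l.
    replace (th * exp ((x - INR K) * l) * (exp (INR K * l) * Gamma N))
      with (th * (exp ((x - INR K) * l) * exp (INR K * l)) * Gamma N) by ring.
    rewrite <- exp_plus. replace ((x - INR K) * l + INR K * l) with (x * l) by ring. ring. }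
  lra.
Qed.

(** * The Beta integral *)

Definition beta_kernel (x z s : R) : R := rpow s (x - 1) * rpow (1 - s) (z - 1).

Definition Beta (x z : R) : R := RInt (beta_kernel x z) 0 1.

Lemma one_minus_continuous s : continuous (fun s => 1 - s) s.
Proof.
  apply continuity_pt_filterlim, derivable_continuous_pt.
  eexists. apply is_derive_Reals. auto_derive; auto.
Qed.

Lemma beta_kernel_continuous x z s : 1 < x -> 1 < z -> continuous (beta_kernel x z) s.
Proof.
  intros Hx Hz.
  apply (continuous_mult (fun s => rpow s (x - 1)) (fun s => rpow (1 - s) (z - 1))).
  - apply rpow_continuous; lra.
  - apply (continuous_comp (fun s => 1 - s) (fun u => rpow u (z - 1))).
    + apply one_minus_continuous.
    + apply rpow_continuous; lra.
Qed.

Lemma beta_kernel_ex x z a b : 1 < x -> 1 < z -> ex_RInt (beta_kernel x z) a b.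
Proof.
  intros. apply (ex_RInt_continuous (V := R_CompleteNormedModule)).
  intros; apply beta_kernel_continuous; auto.
Qed.

Lemma Beta_ge0 x z : 1 < x -> 1 < z -> 0 <= Beta x z.
Proof.
  intros. apply RInt_ge_0; [lra|apply beta_kernel_ex; auto|].
  intros; apply Rmult_le_pos; apply rpow_ge0.
Qed.

Lemma Beta_pos x z : 1 < x -> 1 < z -> 0 < Beta x z.
Proof.
  intros Hx Hz. apply RInt_gt_0; [lra| |intros; apply beta_kernel_continuous; auto].
  intros s Hs. apply Rmult_lt_0_compat; apply rpow_gt0; lra.
Qed.

(* s^(x-1) (1-s)^(z-1) = s^(x-1) (1-s)^z + s^x (1-s)^(z-1), integrated. *)
Lemma Beta_split x z : 1 < x -> 1 < z -> Beta x z = Beta x (z + 1) + Beta (x + 1) z.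
Proof.
  intros Hx Hz. unfold Beta.
  rewrite <- (Rmult_1_l (RInt (beta_kernel x (z + 1)) 0 1)),
          <- (Rmult_1_l (RInt (beta_kernel (x + 1) z) 0 1)).
  rewrite <- RInt_lin2 by (apply beta_kernel_ex; lra).
  apply RInt_ext. intros s _.
  change (beta_kernel x z s = 1 * beta_kernel x (z + 1) s + 1 * beta_kernel (x + 1) z s).
  unfold beta_kernel.
  replace (z + 1 - 1) with ((z - 1) + 1) by ring. replace (x + 1 - 1) with ((x - 1) + 1) by ring.
  rewrite !rpow_S. ring.
Qed.

(* Integration by parts against d/ds [s^x (1-s)^z], which vanishes at 0 and 1:
   x B(x, z+1) = z B(x+1, z). *)
Lemma Beta_parts x z : 1 < x -> 1 < z -> x * Beta x (z + 1) = z * Beta (x + 1) z.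
Proof.
  intros Hx Hz.
  assert (E : RInt (fun s => x * beta_kernel x (z + 1) s + (- z) * beta_kernel (x + 1) z s) 0 1
              = (fun s => rpow s x * rpow (1 - s) z) 1 - (fun s => rpow s x * rpow (1 - s) z) 0).
  { apply (RInt_primitive_eq (fun s => rpow s x * rpow (1 - s) z)); [lra| | |].
    - intros s Hs. apply is_derive_Reals. unfold beta_kernel.
      replace (z + 1 - 1) with z by ring. replace (x + 1 - 1) with x by ring.
      replace (x * (rpow s (x - 1) * rpow (1 - s) z) + - z * (rpow s x * rpow (1 - s) (z - 1)))
        with ((x * rpow s (x - 1)) * rpow (1 - s) z + rpow s x * ((z * rpow (1 - s) (z - 1)) * (-1)))
        by ring.
      apply (derivable_pt_lim_mult (fun s => rpow s x) (fun s => rpow (1 - s) z)).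
      + apply is_derive_Reals, rpow_is_derive; lra.
      + apply (derivable_pt_lim_comp (fun s => 1 - s) (fun u => rpow u z)).
        * apply is_derive_Reals. auto_derive; try ring; auto.
        * apply is_derive_Reals, rpow_is_derive; lra.
    - intros s Hs. apply continuity_pt_filterlim.
      apply (continuous_mult (fun s => rpow s x) (fun s => rpow (1 - s) z)).
      + apply rpow_continuous; lra.
      + apply (continuous_comp (fun s => 1 - s) (fun u => rpow u z));
          [apply one_minus_continuous|apply rpow_continuous; lra].
    - intros s.
      apply (continuous_plus (fun s => x * beta_kernel x (z + 1) s) (fun s => - z * beta_kernel (x + 1) z s)).
      + apply (continuous_mult (fun _ => x) (beta_kernel x (z + 1))); [apply continuous_const|].
        apply beta_kernel_continuous; lra.
      + apply (continuous_mult (fun _ => - z) (beta_kernel (x + 1) z)); [apply continuous_const|].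
        apply beta_kernel_continuous; lra. }
  rewrite RInt_lin2 in E by (apply beta_kernel_ex; lra). simpl in E.
  replace (1 - 1) with 0 in E by ring. rewrite !(rpow_npos 0) in E by lra.
  fold (Beta x (z + 1)) (Beta (x + 1) z) in E. lra.
Qed.

Lemma Beta_rec x z : 1 < x -> 1 < z -> (x + z) * Beta x (z + 1) = z * Beta x z.
Proof.
  intros Hx Hz. rewrite (Beta_split x z Hx Hz).
  pose proof (Beta_parts x z Hx Hz). lra.
Qed.

(* B(x,y) Gamma(x+y) / Gamma(y) is invariant under y -> y + 1. *)
Lemma Beta_Gamma_shift x y n : 1 < x -> 1 < y ->
  Beta x (y + INR n) * Gamma (x + (y + INR n)) * Gamma y = Beta x y * Gamma (x + y) * Gamma (y + INR n).
Proof.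
  intros Hx Hy. induction n as [|n IH].
  - simpl. rewrite Rplus_0_r. ring.
  - rewrite S_INR. set (N := y + INR n) in *. pose proof (pos_INR n).
    replace (y + (INR n + 1)) with (N + 1) by (unfold N; ring).
    replace (x + (N + 1)) with ((x + N) + 1) by ring.
    rewrite Gamma_rec by (unfold N; lra). rewrite (Gamma_rec N) by (unfold N; lra).
    pose proof (Beta_rec x N Hx ltac:(unfold N; lra)) as Hrec.
    transitivity (((x + N) * Beta x (N + 1)) * Gamma (x + N) * Gamma y); [ring|].
    rewrite Hrec. transitivity (N * (Beta x N * Gamma (x + N) * Gamma y)); [ring|].
    rewrite IH. ring.
Qed.

(* ln(1 - s) <= -s, the logarithmic form of e^(-s) >= 1 - s. *)
Lemma ln_one_minus_le s : 0 <= s < 1 -> ln (1 - s) <= - s.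
Proof.
  intros Hs. rewrite <- (ln_exp (- s)). apply ln_le; [lra|].
  pose proof (exp_ineq1_le (- s)). lra.
Qed.

(* Substituting t = (N-1) s and using (1-s)^(N-1) <= e^(-(N-1)s):
   (N-1)^x s^(x-1) (1-s)^(N-1) <= (N-1) ((N-1)s)^(x-1) e^(-(N-1)s). *)
Lemma beta_kernel_le_gamma x N s : 2 <= N -> 0 <= s <= 1 ->
  rpow (N - 1) x * beta_kernel x N s <= (N - 1) * gamma_kernel x ((N - 1) * s).
Proof.
  intros HN Hs. unfold gamma_kernel, beta_kernel. rewrite rpow_mult by nra.
  assert (Hr : rpow (1 - s) (N - 1) <= exp (- ((N - 1) * s))).
  { destruct (Req_dec s 1) as [->|Hs1].
    - rewrite rpow_npos by lra. left; apply exp_pos.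
    - rewrite rpow_pos by lra. unfold Rpower. apply exp_le.
      pose proof (ln_one_minus_le s ltac:(lra)). nra. }
  replace (rpow (N - 1) x) with ((N - 1) * rpow (N - 1) (x - 1))
    by (rewrite <- (rpow_S (N - 1) (x - 1)); f_equal; ring).
  pose proof (rpow_ge0 (N - 1) (x - 1)). pose proof (rpow_ge0 s (x - 1)).
  assert (0 <= (N - 1) * rpow (N - 1) (x - 1) * rpow s (x - 1))
    by (apply Rmult_le_pos; [apply Rmult_le_pos|]; lra).
  apply Rle_trans with ((N - 1) * rpow (N - 1) (x - 1) * rpow s (x - 1) * exp (- ((N - 1) * s)));
    [|right; ring].
  replace ((N - 1) * rpow (N - 1) (x - 1) * (rpow s (x - 1) * rpow (1 - s) (N - 1)))
    with ((N - 1) * rpow (N - 1) (x - 1) * rpow s (x - 1) * rpow (1 - s) (N - 1)) by ring.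
  apply Rmult_le_compat_l; auto.
Qed.

(* Hence B(x,N) (N-1)^x <= int_0^(N-1) t^(x-1) e^(-t) dt <= Gamma(x). *)
Lemma Beta_le_Gamma x N : 1 < x -> 2 <= N -> Beta x N * rpow (N - 1) x <= Gamma x.
Proof.
  intros Hx HN.
  assert (E : Beta x N * rpow (N - 1) x = RInt (fun s => rpow (N - 1) x * beta_kernel x N s) 0 1).
  { rewrite Rmult_comm. symmetry. apply is_RInt_unique.
    apply (is_RInt_scal (V := R_CompleteNormedModule)), RInt_correct, beta_kernel_ex; lra. }
  pose proof (RInt_comp_lin (V := R_CompleteNormedModule) (gamma_kernel x) (N - 1) 0 0 1
                ltac:(apply gamma_kernel_ex; lra)) as Hsub.
  replace ((N - 1) * 0 + 0) with 0 in Hsub by ring.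
  replace ((N - 1) * 1 + 0) with (N - 1) in Hsub by ring.
  rewrite E. eapply Rle_trans.
  - apply RInt_le with (g := fun s => scal (N - 1) (gamma_kernel x ((N - 1) * s + 0))); [lra| | |].
    + apply (ex_RInt_continuous (V := R_CompleteNormedModule)). intros.
      apply (continuous_mult (fun _ => rpow (N - 1) x) (beta_kernel x N)); [apply continuous_const|].
      apply beta_kernel_continuous; lra.
    + apply (ex_RInt_continuous (V := R_CompleteNormedModule)). intros.
      apply (continuous_mult (fun _ => N - 1) (fun s => gamma_kernel x ((N - 1) * s + 0)));
        [apply continuous_const|].
      apply (continuous_comp (fun s => (N - 1) * s + 0) (gamma_kernel x)).
      * apply continuity_pt_filterlim, derivable_continuous_pt. eexists. apply is_derive_Reals.
        auto_derive; auto.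
      * apply gamma_kernel_continuous; lra.
    + intros s Hs. change (scal (N - 1) (gamma_kernel x ((N - 1) * s + 0)))
        with ((N - 1) * gamma_kernel x ((N - 1) * s + 0)).
      rewrite Rplus_0_r. apply beta_kernel_le_gamma; lra.
  - eapply Rle_trans; [right; apply Hsub|].
    destruct (Gamma_spec x Hx) as [G _]. apply G. lra.
Qed.

(* Combining the shift invariance with the two bounds above: for every n,
   B(x,y) Gamma(x+y) <= Gamma(x) Gamma(y) exp(x (K+1)/(y+n-1)) where K >= x+1. *)
Lemma Beta_Gamma_approx x y K n : 1 < x -> 1 < y -> x + 1 <= INR K -> 1 <= INR n ->
  Beta x y * Gamma (x + y) <= Gamma x * Gamma y * exp (x * ((INR K + 1) / (y + INR n - 1))).
Proof.
  intros Hx Hy HK Hn. set (N := y + INR n).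
  assert (HN : 2 <= N) by (unfold N; lra).
  pose proof (Beta_Gamma_shift x y n Hx Hy) as Hinv. fold N in Hinv.
  assert (HGN : 0 < Gamma N) by (apply Gamma_pos; lra).
  assert (HGx : 0 < Gamma x) by (apply Gamma_pos; lra).
  assert (HGy : 0 < Gamma y) by (apply Gamma_pos; lra).
  pose proof (Gamma_shift_le N x K ltac:(lra) ltac:(lra)) as G3.
  replace (N + x) with (x + N) in G3 by ring.
  pose proof (Beta_le_Gamma x N Hx HN) as BG.
  pose proof (Beta_ge0 x N Hx ltac:(lra)) as B0.
  assert (Hr1 : 0 < rpow (N - 1) x) by (apply rpow_gt0; lra).
  assert (Hr2 : 0 <= rpow (N + INR K) x) by apply rpow_ge0.
  assert (S1 : Beta x y * Gamma (x + y) <= Beta x N * rpow (N + INR K) x * Gamma y).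
  { apply Rmult_le_reg_r with (Gamma N); auto. rewrite <- Hinv.
    apply Rle_trans with (Beta x N * (rpow (N + INR K) x * Gamma N) * Gamma y); [|right; ring].
    apply Rmult_le_compat_r; [lra|]. apply Rmult_le_compat_l; auto. }
  assert (S2 : Beta x N <= Gamma x / rpow (N - 1) x).
  { apply Rmult_le_reg_r with (rpow (N - 1) x); auto.
    unfold Rdiv. rewrite Rmult_assoc, Rinv_l by lra. lra. }
  assert (S3 : rpow (N + INR K) x / rpow (N - 1) x <= exp (x * ((INR K + 1) / (N - 1)))).
  { rewrite !rpow_pos by lra. unfold Rpower, Rdiv at 1. rewrite <- exp_Ropp, <- exp_plus.
    apply exp_le.
    replace (x * ln (N + INR K) + - (x * ln (N - 1))) with (x * ln ((N + INR K) * / (N - 1)))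
      by (rewrite ln_mult, ln_Rinv by (try apply Rinv_0_lt_compat; lra); ring).
    apply Rmult_le_compat_l; [lra|].
    pose proof (exp_ineq1_le (ln ((N + INR K) * / (N - 1)))) as Hl.
    rewrite exp_ln in Hl by (apply Rmult_lt_0_compat; [lra|apply Rinv_0_lt_compat; lra]).
    replace ((INR K + 1) / (N - 1)) with ((N + INR K) * / (N - 1) - 1) by (field; lra). lra. }
  eapply Rle_trans; [apply S1|].
  apply Rle_trans with (Gamma x / rpow (N - 1) x * rpow (N + INR K) x * Gamma y).
  - apply Rmult_le_compat_r; [lra|]. apply Rmult_le_compat_r; auto.
  - apply Rle_trans with (Gamma x * Gamma y * (rpow (N + INR K) x / rpow (N - 1) x)).
    + right. field. lra.
    + apply Rmult_le_compat_l; [nra|]. unfold N in S3. exact S3.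
Qed.

(* Letting n -> oo:  B(x,y) Gamma(x+y) <= Gamma(x) Gamma(y). *)
Lemma Beta_Gamma_le x y : 1 < x -> 1 < y -> Beta x y * Gamma (x + y) <= Gamma x * Gamma y.
Proof.
  intros Hx Hy.
  destruct (exists_nat_ge (x + 1)) as [K HK].
  set (V := Beta x y * Gamma (x + y)). set (C := Gamma x * Gamma y).
  assert (HC : 0 < C) by (unfold C; apply Rmult_lt_0_compat; apply Gamma_pos; lra).
  apply NNPP. intros Hc. apply Rnot_le_lt in Hc.
  set (A := x * (INR K + 1)). set (L := ln (V / C)).
  assert (Hq : 0 < L).
  { unfold L. rewrite <- ln_1. apply ln_increasing; [lra|].
    apply (Rmult_lt_reg_r C); auto. unfold Rdiv. rewrite Rmult_assoc, Rinv_l; lra. }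
  assert (HA : 0 < A) by (unfold A; pose proof (pos_INR K); nra).
  destruct (exists_nat_ge (A / L + 1)) as [n Hn].
  assert (HAL : 0 < A / L) by (apply Rdiv_lt_0_compat; auto).
  pose proof (Beta_Gamma_approx x y K n Hx Hy HK ltac:(lra)) as Hb. fold V C in Hb.
  set (D := y + INR n - 1) in *. assert (Hd : 0 < D) by (unfold D; lra).
  assert (HD : x * ((INR K + 1) / D) < L).
  { replace (x * ((INR K + 1) / D)) with (A / D) by (unfold A; field; lra).
    assert (A < L * D).
    { apply (Rmult_lt_reg_r (/ L)); [apply Rinv_0_lt_compat; auto|].
      replace (L * D * / L) with D by (field; lra). unfold D, Rdiv in *; lra. }
    apply (Rmult_lt_reg_r D); auto. replace (A / D * D) with A by (field; lra). lra. }
  apply exp_increasing in HD. unfold L in HD.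
  rewrite exp_ln in HD by (apply Rdiv_lt_0_compat; lra).
  assert (C * exp (x * ((INR K + 1) / D)) < C * (V / C)) by (apply Rmult_lt_compat_l; auto).
  replace (C * (V / C)) with V in H by (field; lra). lra.
Qed.

(** * A Hölder-type bound obtained from Young's inequality *)

(* If X <= l^p P/p + l^(-q) Q/q for every l > 0, then X <= P^(1/p) Q^(1/q);
   first the degenerate case Q = 0, where the bound is 0 (let l -> 0). *)
Lemma le_of_young_family_0 X P p : 0 < P -> 1 < p ->
  (forall l, 0 < l -> X <= rpow l p * P / p) -> X <= 0.
Proof.
  intros HP Hp H. apply Rnot_lt_le. intros HX.
  assert (Hxp : 0 < X * p / P) by (apply Rdiv_lt_0_compat; [apply Rmult_lt_0_compat|]; lra).
  set (mu := (ln (X * p / P) - 1) / p).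
  specialize (H (exp mu) (exp_pos mu)).
  rewrite rpow_pos in H by apply exp_pos. unfold Rpower in H. rewrite ln_exp in H.
  replace (p * mu) with (ln (X * p / P) + - 1) in H by (unfold mu; field; lra).
  rewrite exp_plus, exp_ln in H by exact Hxp.
  assert (exp (- 1) < 1) by (rewrite <- exp_0; apply exp_increasing; lra).
  replace (X * p / P * exp (- 1) * P / p) with (X * exp (- 1)) in H by (field; lra).
  nra.
Qed.

Lemma le_of_young_family X P Q p q : 0 < P -> 0 <= Q -> 1 < p -> 1 < q -> 1 / p + 1 / q = 1 ->
  (forall l, 0 < l -> X <= rpow l p * P / p + rpow l (- q) * Q / q) ->
  X <= rpow P (1 / p) * rpow Q (1 / q).
Proof.
  intros HP HQ Hp Hq Hpq H.
  destruct (Req_dec Q 0) as [HQ0|HQ0].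
  { subst Q. rewrite (rpow_npos 0), Rmult_0_r by lra.
    apply (le_of_young_family_0 X P p); auto.
    intros l Hl. specialize (H l Hl). unfold Rdiv in H. lra. }
  (* otherwise take l = exp ((ln Q - ln P)/(p+q)), which balances both terms *)
  set (a := ln P). set (b := ln Q).
  specialize (H (exp ((b - a) / (p + q))) (exp_pos _)).
  rewrite !rpow_pos in H by apply exp_pos. unfold Rpower in H. rewrite !ln_exp in H.
  rewrite !rpow_pos by lra. unfold Rpower. fold a b.
  replace P with (exp a) in H at 1 by (unfold a; apply exp_ln; lra).
  replace Q with (exp b) in H at 1 by (unfold b; apply exp_ln; lra).
  rewrite <- exp_plus.
  assert (Hpq2 : p + q = p * q).
  { apply (Rmult_eq_reg_r (/ (p * q))); [|apply Rinv_neq_0_compat; nra].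
    rewrite Rinv_r by nra. rewrite <- Hpq. field. lra. }
  set (M := 1 / p * a + 1 / q * b).
  assert (E1 : exp (p * ((b - a) / (p + q))) * exp a = exp M).
  { rewrite <- exp_plus. f_equal. unfold M. rewrite Hpq2.
    replace (1 / p * a) with (a - 1 / q * a) by (replace (1 / p) with (1 - 1 / q) by lra; ring).
    field. lra. }
  assert (E2 : exp (- q * ((b - a) / (p + q))) * exp b = exp M).
  { rewrite <- exp_plus. f_equal. unfold M. rewrite Hpq2.
    replace (1 / q * b) with (b - 1 / p * b) by (replace (1 / q) with (1 - 1 / p) by lra; ring).
    field. lra. }
  rewrite E1, E2 in H.
  replace (exp M) with (exp M * (1 / p + 1 / q)) by (rewrite Hpq; ring).
  unfold Rdiv in *. lra.
Qed.

Lemma abs_increment_le (phi dphi Psi dPsi : R -> R) a b : a <= b ->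
  (forall s, a < s < b -> is_derive phi s (dphi s)) ->
  (forall s, a <= s <= b -> continuity_pt phi s) ->
  (forall s, a < s < b -> is_derive Psi s (dPsi s)) ->
  (forall s, a <= s <= b -> continuity_pt Psi s) ->
  (forall s, a < s < b -> Rabs (dphi s) <= dPsi s) ->
  Rabs (phi b - phi a) <= Psi b - Psi a.
Proof.
  intros Hab Dphi Cphi DPsi CPsi Key.
  assert (M1 : (fun s => Psi s - phi s) a <= (fun s => Psi s - phi s) b).
  { apply (le_of_deriv_nonneg (fun s => Psi s - phi s) (fun s => dPsi s - dphi s)); auto.
    - intros s Hs. apply is_derive_Reals, derivable_pt_lim_minus; apply is_derive_Reals; auto.
    - intros s Hs. apply continuity_pt_minus; auto.
    - intros s Hs. pose proof (Key s Hs). pose proof (Rle_abs (dphi s)). lra. }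
  assert (M2 : (fun s => Psi s + phi s) a <= (fun s => Psi s + phi s) b).
  { apply (le_of_deriv_nonneg (fun s => Psi s + phi s) (fun s => dPsi s + dphi s)); auto.
    - intros s Hs. apply is_derive_Reals, derivable_pt_lim_plus; apply is_derive_Reals; auto.
    - intros s Hs. apply continuity_pt_plus; auto.
    - intros s Hs. pose proof (Key s Hs). pose proof (Rle_abs (- dphi s)) as Hn.
      rewrite Rabs_Ropp in Hn. lra. }
  simpl in M1, M2. apply Rabs_le. lra.
Qed.

Lemma rpow_simpson_weight s p : 0 <= s <= 1 ->
  rpow (s * (1 - s) ^ 2) p = beta_kernel (p + 1) (2 * p + 1) s.
Proof.
  intros Hs. unfold beta_kernel.
  rewrite rpow_mult by (try apply pow_le; lra). simpl. rewrite Rmult_1_r, rpow_mult by lra.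
  replace (p + 1 - 1) with p by ring. replace (2 * p + 1 - 1) with (p + p) by ring.
  rewrite rpow_plus. ring.
Qed.

(* Young's inequality with parameter l > 0 applied to (l w(s)) (g / l):
   w(s) g <= l^p w(s)^p / p + l^(-q) g^q / q  for the weight w(s) = s(1-s)^2. *)
Lemma young_simpson_weight l s g p q : 0 < l -> 0 <= s <= 1 -> 0 <= g ->
  1 < p -> 1 < q -> 1 / p + 1 / q = 1 ->
  s * (1 - s) ^ 2 * g
    <= rpow l p * beta_kernel (p + 1) (2 * p + 1) s / p + rpow l (- q) * rpow g q / q.
Proof.
  intros Hl Hs Hg Hp Hq Hpq.
  assert (Hw : 0 <= s * (1 - s) ^ 2) by (apply Rmult_le_pos; [lra|apply pow_le; lra]).
  pose proof (young (l * (s * (1 - s) ^ 2)) (g / l) p q ltac:(nra)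
                ltac:(apply Rdiv_le_0_compat; lra) ltac:(lra) ltac:(lra) Hpq) as Hy.
  replace (l * (s * (1 - s) ^ 2) * (g / l)) with (s * (1 - s) ^ 2 * g) in Hy by (field; lra).
  rewrite rpow_mult, rpow_simpson_weight in Hy by lra.
  unfold Rdiv at 3 in Hy. rewrite rpow_mult in Hy by (try apply Rlt_le, Rinv_0_lt_compat; lra).
  assert (Hinv : rpow (/ l) q = rpow l (- q)).
  { rewrite !rpow_pos by (try apply Rinv_0_lt_compat; lra).
    unfold Rpower. rewrite ln_Rinv by lra. f_equal. ring. }
  rewrite Hinv, (Rmult_comm (rpow g q)) in Hy. exact Hy.
Qed.

(* For each l > 0, Young bounds phi' by the derivative of
   c (l^p W/p + l^(-q) G/q), W a primitive of the Beta integrand; comparing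
   increments gives a family of bounds, which is then optimised in l. *)
Section HolderBound.

Variables (phi dphi g G H : R -> R) (c p q : R).
Hypothesis (Hp : 1 < p) (Hq : 1 < q) (Hpq : 1 / p + 1 / q = 1) (Hc : 0 <= c).
Hypothesis (Dphi : forall s, 0 < s < 1 -> is_derive phi s (dphi s))
           (Cphi : forall s, 0 <= s <= 1 -> continuity_pt phi s)
           (Bphi : forall s, 0 < s < 1 -> Rabs (dphi s) <= c * (s * (1 - s) ^ 2) * g s).
Hypothesis (Hg : forall s, 0 < s < 1 -> 0 <= g s)
           (HgH : forall s, 0 < s < 1 -> rpow (g s) q <= H s)
           (DG : forall s, 0 < s < 1 -> is_derive G s (H s))
           (CG : forall s, 0 <= s <= 1 -> continuity_pt G s).

Lemma holder_family l : 0 < l ->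
  Rabs (phi 1 - phi 0)
  <= c * (rpow l p * Beta (p + 1) (2 * p + 1) / p + rpow l (- q) * (G 1 - G 0) / q).
Proof.
  intros Hl. set (w := beta_kernel (p + 1) (2 * p + 1)).
  set (W := fun s => RInt w 0 s).
  assert (Hw : forall s, continuous w s) by (intros; apply beta_kernel_continuous; lra).
  assert (HB : Beta (p + 1) (2 * p + 1) = W 1 - W 0).
  { unfold W, Beta. rewrite RInt_point. unfold zero; simpl. rewrite Rminus_0_r. reflexivity. }
  set (cp := rpow l p / p). set (cq := rpow l (- q) / q).
  replace (c * (rpow l p * Beta (p + 1) (2 * p + 1) / p + rpow l (- q) * (G 1 - G 0) / q))
    with ((fun s => c * (cp * W s + cq * G s)) 1 - (fun s => c * (cp * W s + cq * G s)) 0)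
    by (rewrite HB; unfold cp, cq; simpl; field; lra).
  apply (abs_increment_le phi dphi (fun s => c * (cp * W s + cq * G s))
           (fun s => c * (cp * w s + cq * H s))); auto; [lra| | |].
  - intros s Hs. apply is_derive_Reals.
    apply derivable_pt_lim_scal, derivable_pt_lim_plus; apply derivable_pt_lim_scal.
    + apply is_derive_Reals, is_derive_RInt_upper; auto.
    + apply is_derive_Reals; auto.
  - intros s Hs. apply continuity_pt_scal, continuity_pt_plus; apply continuity_pt_scal; auto.
    apply continuity_RInt_upper; auto.
  - intros s Hs. eapply Rle_trans; [apply Bphi; auto|].
    rewrite Rmult_assoc. apply Rmult_le_compat_l; auto.
    eapply Rle_trans; [apply (young_simpson_weight l s (g s) p q); auto; lra|].
    pose proof (rpow_ge0 l (- q)). pose proof (HgH s Hs).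
    assert (0 <= / q) by (left; apply Rinv_0_lt_compat; lra).
    unfold cp, cq, Rdiv. fold w.
    assert (0 <= rpow l (- q) * / q) by (apply Rmult_le_pos; auto). nra.
Qed.

Lemma holder_bound :
  Rabs (phi 1 - phi 0) <= c * rpow (Beta (p + 1) (2 * p + 1)) (1 / p) * rpow (G 1 - G 0) (1 / q).
Proof.
  assert (HB : 0 < Beta (p + 1) (2 * p + 1)) by (apply Beta_pos; lra).
  assert (HGinc : G 0 <= G 1).
  { apply (le_of_deriv_nonneg G H); auto; [lra|].
    intros s Hs. eapply Rle_trans; [apply rpow_ge0|auto]. }
  destruct (Req_dec c 0) as [Hc0|Hc0].
  { pose proof (holder_family 1 Rlt_0_1). rewrite Hc0, !Rmult_0_l in *. lra. }
  apply (Rmult_le_reg_l (/ c)); [apply Rinv_0_lt_compat; lra|].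
  replace (/ c * (c * rpow (Beta (p + 1) (2 * p + 1)) (1 / p) * rpow (G 1 - G 0) (1 / q)))
    with (rpow (Beta (p + 1) (2 * p + 1)) (1 / p) * rpow (G 1 - G 0) (1 / q)) by (field; lra).
  apply le_of_young_family; auto; [lra|].
  intros l Hl. apply (Rmult_le_reg_l c); [lra|].
  replace (c * (/ c * Rabs (phi 1 - phi 0))) with (Rabs (phi 1 - phi 0)) by (field; lra).
  apply holder_family; auto.
Qed.

End HolderBound.

(** * The Simpson kernel *)

(* Coefficients of the primitive below: K0(s) = -s(1-s)^2/6, K1 = K0',
   K2 = K1' and K2' = -1, so that all terms but one cancel in its derivative. *)
Definition simpson_K0 (s : R) : R := - (s - 2 * s ^ 2 + s ^ 3) / 6.
Definition simpson_K1 (s : R) : R := - (1 - 4 * s + 3 * s ^ 2) / 6.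
Definition simpson_K2 (s : R) : R := - (-4 + 6 * s) / 6.

Lemma simpson_K0_abs s : 0 <= s <= 1 -> Rabs (simpson_K0 s) = s * (1 - s) ^ 2 / 6.
Proof.
  intros Hs. unfold simpson_K0. rewrite Rabs_left1; [field|].
  assert (0 <= s * (1 - s) ^ 2) by (apply Rmult_le_pos; [lra|apply pow_le; lra]).
  replace (- (s - 2 * s ^ 2 + s ^ 3) / 6) with (- (s * (1 - s) ^ 2) / 6) by field. lra.
Qed.

Definition simpson_primitive (f f1 f2 F : R -> R) (c h s : R) : R :=
  h ^ 3 * simpson_K0 s * f2 (c + s * h) - h ^ 2 * simpson_K1 s * f1 (c + s * h)
  + h * simpson_K2 s * f (c + s * h) + F (c + s * h).

Lemma simpson_primitive_deriv (f f1 f2 f3 F : R -> R) c h s :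
  is_derive f (c + s * h) (f1 (c + s * h)) ->
  is_derive f1 (c + s * h) (f2 (c + s * h)) ->
  is_derive f2 (c + s * h) (f3 (c + s * h)) ->
  is_derive F (c + s * h) (f (c + s * h)) ->
  is_derive (simpson_primitive f f1 f2 F c h) s (h ^ 4 * simpson_K0 s * f3 (c + s * h)).
Proof.
  intros D0 D1 D2 DF. unfold simpson_primitive, simpson_K0, simpson_K1, simpson_K2.
  auto_derive.
  - repeat split; eexists; eauto.
  - replace (Derive (fun x => f x) (c + s * h)) with (f1 (c + s * h))
      by (symmetry; apply is_derive_unique; exact D0).
    replace (Derive (fun x => f1 x) (c + s * h)) with (f2 (c + s * h))
      by (symmetry; apply is_derive_unique; exact D1).
    replace (Derive (fun x => f2 x) (c + s * h)) with (f3 (c + s * h))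
      by (symmetry; apply is_derive_unique; exact D2).
    replace (Derive (fun x => F x) (c + s * h)) with (f (c + s * h))
      by (symmetry; apply is_derive_unique; exact DF).
    field.
Qed.

Lemma simpson_primitive_increment (f f1 f2 F : R -> R) c h :
  simpson_primitive f f1 f2 F c h 1 - simpson_primitive f f1 f2 F c h 0 =
  F (c + h) - F c - h / 3 * f (c + h) - 2 * h / 3 * f c - h ^ 2 / 6 * f1 c.
Proof.
  unfold simpson_primitive, simpson_K0, simpson_K1, simpson_K2.
  replace (c + 1 * h) with (c + h) by ring. replace (c + 0 * h) with c by ring. field.
Qed.

Lemma simpson_error_split (f f1 f2 F : R -> R) a v :
  F v - F a - (v - a) / 6 * (f a + 4 * f ((a + v) / 2) + f v) =
  (simpson_primitive f f1 f2 F ((a + v) / 2) ((v - a) / 2) 1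
     - simpson_primitive f f1 f2 F ((a + v) / 2) ((v - a) / 2) 0)
  - (simpson_primitive f f1 f2 F ((a + v) / 2) (- ((v - a) / 2)) 1
     - simpson_primitive f f1 f2 F ((a + v) / 2) (- ((v - a) / 2)) 0).
Proof.
  rewrite !simpson_primitive_increment.
  replace ((a + v) / 2 + (v - a) / 2) with v by field.
  replace ((a + v) / 2 + - ((v - a) / 2)) with a by field.
  field.
Qed.

(** * A primitive of the (alpha,m)-convexity bound *)

Definition convex_primitive (A B m alpha k s : R) : R :=
  m * B * s + (A - m * B) / (k * (alpha + 1)) * rpow (1 / 2 + k * s) (alpha + 1).

Lemma convex_primitive_deriv A B m alpha k s : 0 <= alpha -> k <> 0 -> 0 < 1 / 2 + k * s ->
  is_derive (convex_primitive A B m alpha k) s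
    (rpow (1 / 2 + k * s) alpha * A + m * (1 - rpow (1 / 2 + k * s) alpha) * B).
Proof.
  intros Hal Hk Hs. unfold convex_primitive. apply is_derive_Reals.
  replace (rpow (1 / 2 + k * s) alpha * A + m * (1 - rpow (1 / 2 + k * s) alpha) * B)
    with (m * B * 1 + (A - m * B) / (k * (alpha + 1))
                      * (((alpha + 1) * rpow (1 / 2 + k * s) (alpha + 1 - 1)) * k))
    by (replace (alpha + 1 - 1) with alpha by ring; field; split; lra).
  apply derivable_pt_lim_plus.
  - apply derivable_pt_lim_scal, derivable_pt_lim_id.
  - apply derivable_pt_lim_scal.
    apply (derivable_pt_lim_comp (fun s => 1 / 2 + k * s) (fun u => rpow u (alpha + 1))).
    + apply is_derive_Reals. auto_derive; auto. ring.
    + apply is_derive_Reals, rpow_is_derive; auto.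
Qed.

Lemma convex_primitive_continuous A B m alpha k s : 0 <= alpha ->
  continuity_pt (convex_primitive A B m alpha k) s.
Proof.
  intros Hal. unfold convex_primitive. apply continuity_pt_plus.
  - apply derivable_continuous_pt. eexists. apply is_derive_Reals. auto_derive; auto.
  - apply continuity_pt_scal, continuity_pt_filterlim.
    apply (continuous_comp (fun s => 1 / 2 + k * s) (fun u => rpow u (alpha + 1))).
    + apply continuity_pt_filterlim, derivable_continuous_pt. eexists.
      apply is_derive_Reals. auto_derive; auto.
    + apply rpow_continuous; lra.
Qed.

Lemma rpow_half alpha : rpow (1 / 2) (alpha + 1) = / (2 * Rpower 2 alpha).
Proof.
  rewrite rpow_pos by lra.
  replace (2 * Rpower 2 alpha) with (exp ((alpha + 1) * ln 2))
    by (unfold Rpower; rewrite Rmult_plus_distr_r, Rmult_1_l, exp_plus, exp_ln by lra; ring).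
  unfold Rpower. replace (1 / 2) with (/ 2) by field.
  rewrite ln_Rinv by lra. rewrite <- exp_Ropp. f_equal. ring.
Qed.

(* The increments of G_k for k = -1/2 and k = 1/2 are the two brackets of the
   theorem (the integrals of the convexity bound over each half). *)
Lemma convex_primitive_increment_right A B m alpha : 0 <= alpha ->
  convex_primitive A B m alpha (- (1 / 2)) 1 - convex_primitive A B m alpha (- (1 / 2)) 0 =
  (A + m * (Rpower 2 alpha * (1 + alpha) - 1) * B) / (Rpower 2 alpha * (1 + alpha)).
Proof.
  intros Hal. unfold convex_primitive.
  replace (1 / 2 + - (1 / 2) * 1) with 0 by ring.
  replace (1 / 2 + - (1 / 2) * 0) with (1 / 2) by ring.
  rewrite (rpow_npos 0), rpow_half by lra.
  assert (0 < Rpower 2 alpha) by (unfold Rpower; apply exp_pos).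
  field. split; lra.
Qed.

Lemma convex_primitive_increment_left A B m alpha : 0 <= alpha ->
  convex_primitive A B m alpha (1 / 2) 1 - convex_primitive A B m alpha (1 / 2) 0 =
  ((Rpower 2 (1 + alpha) - 1) * A + m * (Rpower 2 alpha * (1 + alpha) - (Rpower 2 (1 + alpha) - 1)) * B)
    / (Rpower 2 alpha * (1 + alpha)).
Proof.
  intros Hal. unfold convex_primitive.
  replace (1 / 2 + 1 / 2 * 1) with 1 by lra.
  replace (1 / 2 + 1 / 2 * 0) with (1 / 2) by lra.
  replace (rpow 1 (alpha + 1)) with 1
    by (rewrite (rpow_pos 1) by lra; unfold Rpower; rewrite ln_1, Rmult_0_r, exp_0; auto).
  rewrite rpow_half.
  replace (Rpower 2 (1 + alpha)) with (2 * Rpower 2 alpha)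
    by (rewrite Rpower_plus, Rpower_1 by lra; ring).
  assert (0 < Rpower 2 alpha) by (unfold Rpower; apply exp_pos).
  field. split; lra.
Qed.

Lemma convexity_bound (f3 : R -> R) (bstar alpha m q a b t : R) :
  1 < q -> 0 < t <= 1 -> 0 <= a <= bstar -> 0 <= b <= bstar ->
  alpha_m_convex alpha m bstar (fun x => powR (Rabs (f3 x)) q) ->
  rpow (Rabs (f3 (t * a + m * (1 - t) * b))) q
  <= rpow t alpha * powR (Rabs (f3 a)) q + m * (1 - rpow t alpha) * powR (Rabs (f3 b)) q.
Proof.
  intros Hq Ht Ha Hb Hconv.
  pose proof (Hconv a b t Ha Hb ltac:(lra)) as Hc. simpl in Hc.
  rewrite !(powR_pos t), (rpow_powR _ q) in Hc by (try apply Rabs_pos; lra).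
  exact Hc.
Qed.

Lemma simpson_point a v k h s : h = - k * (v - a) ->
  (a + v) / 2 + s * h = (1 / 2 + k * s) * a + (1 - (1 / 2 + k * s)) * v.
Proof. intros ->. field. Qed.

Lemma simpson_half_bound (bstar : R) (f f1 f2 f3 F : R -> R) (a b alpha m p q k h : R) :
  1 < p -> 1 < q -> 1 / p + 1 / q = 1 -> 0 <= alpha -> 0 < m <= 1 ->
  0 <= a <= bstar -> 0 <= b <= bstar ->
  (k = 1 / 2 \/ k = - (1 / 2)) -> h = - k * (m * b - a) ->
  (forall x, 0 <= x <= bstar -> is_derive f x (f1 x) /\ is_derive f1 x (f2 x) /\
                                 is_derive f2 x (f3 x) /\ is_derive F x (f x)) ->
  alpha_m_convex alpha m bstar (fun x => powR (Rabs (f3 x)) q) ->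
  Rabs (simpson_primitive f f1 f2 F ((a + m * b) / 2) h 1
        - simpson_primitive f f1 f2 F ((a + m * b) / 2) h 0)
  <= (m * b - a) ^ 4 / 96 * rpow (Beta (p + 1) (2 * p + 1)) (1 / p)
     * rpow (convex_primitive (powR (Rabs (f3 a)) q) (powR (Rabs (f3 b)) q) m alpha k 1
             - convex_primitive (powR (Rabs (f3 a)) q) (powR (Rabs (f3 b)) q) m alpha k 0) (1 / q).
Proof.
  intros Hp Hq Hpq Hal Hm Ha Hb Hk Hh HD Hconv.
  set (v := m * b). set (c := (a + v) / 2).
  assert (Hv : 0 <= v <= bstar) by (unfold v; split; nra).
  assert (Ht : forall s, 0 <= s <= 1 -> 0 <= 1 / 2 + k * s <= 1) by (intros; destruct Hk; subst k; lra).
  assert (Hdom : forall s, 0 <= s <= 1 -> 0 <= c + s * h <= bstar).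
  { intros s Hs. unfold c. rewrite (simpson_point a v k h s Hh).
    specialize (Ht s Hs). split; nra. }
  assert (Hh4 : h ^ 4 = (v - a) ^ 4 / 16) by (rewrite Hh; destruct Hk; subst k; unfold v; field).
  apply (holder_bound _ (fun s => h ^ 4 * simpson_K0 s * f3 (c + s * h))
           (fun s => Rabs (f3 (c + s * h))) _
           (fun s => rpow (1 / 2 + k * s) alpha * powR (Rabs (f3 a)) q
                     + m * (1 - rpow (1 / 2 + k * s) alpha) * powR (Rabs (f3 b)) q)); auto.
  - pose proof (pow4_ge0 (v - a)). unfold v in *. lra.
  - intros s Hs. destruct (HD (c + s * h) (Hdom s ltac:(lra))) as [D0 [D1 [D2 DF]]].
    apply simpson_primitive_deriv; auto.
  - intros s Hs. destruct (HD (c + s * h) (Hdom s Hs)) as [D0 [D1 [D2 DF]]].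
    apply derivable_continuous_pt. eexists. apply is_derive_Reals, simpson_primitive_deriv; eauto.
  - intros s Hs. pose proof (pow4_ge0 (v - a)).
    rewrite !Rabs_mult, Hh4, simpson_K0_abs, (Rabs_pos_eq ((v - a) ^ 4 / 16)) by lra.
    unfold v. right. field.
  - intros; apply Rabs_pos.
  - intros s Hs.
    replace (c + s * h) with ((1 / 2 + k * s) * a + m * (1 - (1 / 2 + k * s)) * b)
      by (unfold c; rewrite (simpson_point a v k h s Hh); unfold v; ring).
    apply (convexity_bound f3 bstar); auto. specialize (Ht s ltac:(lra)).
    destruct Hk; subst k; lra.
  - intros s Hs. apply convex_primitive_deriv; [lra|destruct Hk; subst k; lra|].
    destruct Hk; subst k; lra.
  - intros s Hs. apply convex_primitive_continuous; lra.
Qed.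

Lemma RInt_primitive_on (f f1 : R -> R) (c d : R) : c < 0 < d ->
  (forall x, c < x < d -> derivable_pt_lim f x (f1 x)) ->
  (forall x, c < x < d -> is_derive (fun y => RInt f 0 y) x (f x)) /\
  (forall u v (pr : Riemann_integrable f u v), c < u < d -> c < v < d ->
     RiemannInt pr = RInt f 0 v - RInt f 0 u).
Proof.
  intros Hcd Hder.
  assert (Hcont : forall x, c < x < d -> continuous f x).
  { intros x Hx. apply continuity_pt_filterlim, derivable_continuous_pt.
    exists (f1 x). apply Hder; auto. }
  assert (Hex : forall y z, c < y < d -> c < z < d -> ex_RInt f y z).
  { intros y z Hy Hz. apply (ex_RInt_continuous (V := R_CompleteNormedModule)). intros w Hw.
    apply Hcont. split.
    - eapply Rlt_le_trans; [|apply Hw]. apply Rmin_glb_lt; lra.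
    - eapply Rle_lt_trans; [apply Hw|]. apply Rmax_lub_lt; lra. }
  split.
  - intros x Hx.
    assert (Hd : 0 < Rmin (x - c) (d - x)) by (apply Rmin_glb_lt; lra).
    apply (is_derive_RInt (V := R_CompleteNormedModule) f _ 0 x); [|apply Hcont; auto].
    exists (mkposreal _ Hd). intros y Hy. unfold ball in Hy; simpl in Hy.
    unfold AbsRing_ball, abs, minus, plus, opp in Hy; simpl in Hy. apply Rabs_def2 in Hy.
    pose proof (Rmin_l (x - c) (d - x)). pose proof (Rmin_r (x - c) (d - x)).
    apply RInt_correct, Hex; lra.
  - intros u v pr Hu Hv. rewrite <- RInt_Reals.
    assert (HC : RInt f 0 u + RInt f u v = RInt f 0 v)
      by (apply (RInt_Chasles (V := R_CompleteNormedModule) f 0 u v); apply Hex; lra).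
    match goal with |- ?x = ?y => change (@eq R x y) end. lra.
Qed.

Lemma Beta_rpow_le_Gamma_quotient p : 1 < p ->
  rpow (Beta (p + 1) (2 * p + 1)) (1 / p)
  <= powR (Gamma (2 * p + 1) * Gamma (p + 1) / Gamma (3 * p + 2)) (1 / p).
Proof.
  intros Hp.
  assert (HG : 0 < Gamma (3 * p + 2)) by (apply Gamma_pos; lra).
  pose proof (Beta_Gamma_le (p + 1) (2 * p + 1) ltac:(lra) ltac:(lra)) as HBG.
  replace (p + 1 + (2 * p + 1)) with (3 * p + 2) in HBG by ring.
  assert (Hp0 : 0 < 1 / p) by (apply Rdiv_lt_0_compat; lra).
  eapply Rle_trans; [|apply rpow_le_powR; lra].
  apply rpow_le_l; [lra|split; [apply Beta_ge0; lra|]].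
  apply (Rmult_le_reg_r (Gamma (3 * p + 2))); auto.
  unfold Rdiv. rewrite Rmult_assoc, Rinv_l by lra. lra.
Qed.

Lemma abs_sub_le_of_bounds E1 E2 C Y Z X1 X2 U1 U2 :
  0 <= C -> 0 <= Y <= Z -> 0 <= X1 <= U1 -> 0 <= X2 <= U2 ->
  Rabs E1 <= C * Y * X1 -> Rabs E2 <= C * Y * X2 ->
  Rabs (E1 - E2) <= C * Z * (U1 + U2).
Proof.
  intros HC HY HX1 HX2 H1 H2.
  unfold Rminus. eapply Rle_trans; [apply Rabs_triang|]. rewrite Rabs_Ropp.
  assert (C * Y <= C * Z) by (apply Rmult_le_compat_l; lra).
  assert (0 <= C * Y) by (apply Rmult_le_pos; lra).
  assert (C * Y * X1 <= C * Z * U1) by (apply Rmult_le_compat; lra).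
  assert (C * Y * X2 <= C * Z * U2) by (apply Rmult_le_compat; lra).
  lra.
Qed.

Theorem theorem4 (bstar : R) (f f1 f2 f3 : R -> R) (a b alpha m p q : R) :
  0 < bstar ->
  (exists c d, c < 0 /\ bstar < d /\
     forall x, c < x < d ->
       derivable_pt_lim f x (f1 x) /\
       derivable_pt_lim f1 x (f2 x) /\
       derivable_pt_lim f2 x (f3 x)) ->
  0 <= a <= bstar -> 0 <= b <= bstar -> a < b ->
  0 <= alpha <= 1 -> 0 < m <= 1 ->
  1 < q -> 1 / p + 1 / q = 1 ->
  alpha_m_convex alpha m bstar (fun x => powR (Rabs (f3 x)) q) ->
  forall pr : Riemann_integrable f a (m * b),
    Rabs (RiemannInt pr
          - (m * b - a) / 6 * (f a + 4 * f ((a + m * b) / 2) + f (m * b)))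
    <= (m * b - a) ^ 4 / 96
       * powR (Gamma (2 * p + 1) * Gamma (p + 1) / Gamma (3 * p + 2)) (1 / p)
       * ( powR ((powR (Rabs (f3 a)) q
                  + m * (Rpower 2 alpha * (1 + alpha) - 1) * powR (Rabs (f3 b)) q)
                 / (Rpower 2 alpha * (1 + alpha))) (1 / q)
         + powR (((Rpower 2 (1 + alpha) - 1) * powR (Rabs (f3 a)) q
                  + m * (Rpower 2 alpha * (1 + alpha) - (Rpower 2 (1 + alpha) - 1))
                      * powR (Rabs (f3 b)) q)
                 / (Rpower 2 alpha * (1 + alpha))) (1 / q) ).
Proof.
  intros Hbs [c [d [Hc [Hd Hderiv]]]] Ha Hb Hab Hal Hm Hq Hpq Hconv pr.
  pose proof (conjugate_exponent_gt1 p q Hq Hpq) as Hp.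
  destruct (RInt_primitive_on f f1 c d ltac:(lra) ltac:(intros x Hx; apply Hderiv; auto))
    as [DF HI].
  assert (HD : forall x, 0 <= x <= bstar -> is_derive f x (f1 x) /\ is_derive f1 x (f2 x) /\
                 is_derive f2 x (f3 x) /\ is_derive (fun y => RInt f 0 y) x (f x)).
  { intros x Hx. destruct (Hderiv x ltac:(lra)) as [D0 [D1 D2]].
    split; [|split; [|split]]; try (apply is_derive_Reals; assumption). apply DF; lra. }
  rewrite (HI a (m * b) pr) by nra. rewrite (simpson_error_split f f1 f2).
  pose proof (simpson_half_bound bstar f f1 f2 f3 _ a b alpha m p q (- (1 / 2)) ((m * b - a) / 2)
                Hp Hq Hpq ltac:(lra) Hm Ha Hb ltac:(auto) ltac:(field) HD Hconv) as R1.
  pose proof (simpson_half_bound bstar f f1 f2 f3 _ a b alpha m p q (1 / 2) (- ((m * b - a) / 2))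
                Hp Hq Hpq ltac:(lra) Hm Ha Hb ltac:(auto) ltac:(field) HD Hconv) as R2.
  rewrite convex_primitive_increment_right in R1 by lra.
  rewrite convex_primitive_increment_left in R2 by lra.
  pose proof (Beta_rpow_le_Gamma_quotient p Hp) as HBG.
  assert (Hq0 : 1 / q <> 0) by (apply Rgt_not_eq, Rdiv_lt_0_compat; lra).
  refine (abs_sub_le_of_bounds _ _ _ _ _ _ _ _ _ _ (conj (rpow_ge0 _ _) HBG)
            (conj (rpow_ge0 _ _) (rpow_le_powR _ _ Hq0))
            (conj (rpow_ge0 _ _) (rpow_le_powR _ _ Hq0)) R1 R2).
  apply Rdiv_le_0_compat; [apply pow4_ge0|lra].
Qed.
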